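(* For every integer $n\ge0$, $$\sum_{k=0}^n\frac{\binom{n}{k}(-1)^k}{4k+1}=\frac{1}{4n+1}\cdot\frac{(-1)^n}{\binom{-1/4}{n}},\qquad \sum_{k=0}^n\frac{\binom{n}{k}(-1)^k}{4k+1}H_k=-\frac{1}{4n+1}\cdot\frac{(-1)^n}{\binom{-1/4}{n}}\sum_{k=1}^n\frac{\binom{-1/4}{k}(-1)^k}{k},$$ and $$\sum_{k=0}^n\frac{\binom{n}{k}(-1)^k}{4k+3}=\frac{(-1)^n}{(4n+3)\binom{-3/4}{n}},\qquad \sum_{k=0}^n\frac{\binom{n}{k}(-1)^kH_k}{4k+3}=-\frac{(-1)^n}{(4n+3)\binom{-3/4}{n}}\sum_{k=1}^n\frac{\binom{-3/4}{k}(-1)^k}{k}.$$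
   Context: $H_k=\sum_{i=1}^k1/i$ with $H_0=0$; for rational $a$, $\binom{a}{k}=a(a-1)\cdots(a-k+1)/k!$. *)

From mathcomp Require Import all_boot all_order all_algebra.
Set Implicit Arguments. Unset Strict Implicit. Unset Printing Implicit Defensive.
Import Order.TTheory GRing.Theory Num.Theory.
Local Open Scope ring_scope.

Definition harmonic (k : nat) : rat := \sum_(1 <= i < k.+1) (i%:R)^-1.

Definition gbinom (a : rat) (k : nat) : rat :=
  (\prod_(i < k) (a - i%:R)) / (k`!)%:R.

From mathcomp Require Import all_boot all_order all_algebra.
From mathcomp Require Import ring.
Import Order.TTheory GRing.Theory Num.Theory.
Set Implicit Arguments. Unset Strict Implicit.
Local Open Scope ring_scope.

(* For b, c > 0 and a weight w : nat -> Q consider the binomial transform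
     S_n(w) = \sum_{k<=n} C(n,k) (-1)^k w_k / (b k + c).
   Absorption, (n+1) C(n,k) = (n+1-k) C(n+1,k), together with
   b(n+1-k) = (b(n+1)+c) - (bk+c), gives the first-order recurrence
     (b(n+1)+c) S_{n+1}(w) = \sum_k C(n+1,k)(-1)^k w_k + b(n+1) S_n(w).
   For w = 1 the inhomogeneous term is an alternating row sum of Pascal's
   triangle, hence 0, and induction gives
     S_n(1) = (-1)^n / ((bn+c) binom(-c/b, n)).
   Pascal's rule turns \sum_k C(n+1,k)(-1)^k f_k into an alternating sum of the
   forward differences of f over row n; for f = H these are -1/(k+1), so the
   case b = c = 1 of the formula above yields \sum_k C(n+1,k)(-1)^k H_k = -1/(n+1).
   Feeding this into the recurrence for w = H, induction gives
     S_n(H) = - S_n(1) \sum_{1<=k<=n} binom(-c/b, k)(-1)^k / k.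
   The theorem is the instance b = 4 with c = 1 and c = 3. *)

Lemma alt_binom_sum_diff (R : comPzRingType) n (f : nat -> R) :
  \sum_(0 <= k < n.+2) ('C(n.+1, k)%:R * (-1) ^+ k * f k)
  = \sum_(0 <= k < n.+1) ('C(n, k)%:R * (-1) ^+ k * (f k - f k.+1)).
Proof.
rewrite big_nat_recl //=.
under eq_bigr => k _ do rewrite binS natrD mulrDl mulrDl.
rewrite big_split /=.
rewrite [X in _ + (X + _)]big_nat_recr //= (bin_small (ltnSn n)) mul0r mul0r addr0.
have -> : \sum_(0 <= i < n) ('C(n, i.+1)%:R * (-1) ^+ i.+1 * f i.+1 : R)
   = \sum_(0 <= i < n.+1) ('C(n, i)%:R * (-1) ^+ i * f i) - f 0%N.
  by rewrite [in RHS]big_nat_recl //= bin0 expr0; ring.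
rewrite bin0 expr0.
under [X in _ = X]eq_bigr => k _ do rewrite mulrBr.
rewrite sumrB.
have -> : \sum_(0 <= i < n.+1) ('C(n, i)%:R * (-1) ^+ i.+1 * f i.+1 : R)
  = - \sum_(0 <= i < n.+1) ('C(n, i)%:R * (-1) ^+ i * f i.+1).
  by rewrite -sumrN; apply: eq_bigr => i _; rewrite exprS mulN1r mulrN mulNr.
ring.
Qed.

Lemma alt_binom_sum0 (R : comPzRingType) n :
  \sum_(0 <= k < n.+2) ('C(n.+1, k)%:R * (-1) ^+ k : R) = 0.
Proof.
have := alt_binom_sum_diff n (fun _ => 1 : R).
under eq_bigr do rewrite mulr1.
by move=> ->; apply: big1 => i _; rewrite subrr mulr0.
Qed.

Definition alt_wsum (R : fieldType) (b c : R) (w : nat -> R) n : R :=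
  \sum_(0 <= k < n.+1) ('C(n, k)%:R * (-1) ^+ k * w k / (b * k%:R + c)).

Lemma alt_wsumS (R : numFieldType) (b c : R) (w : nat -> R) n :
  (forall k, b * k%:R + c != 0) ->
  (b * (n.+1)%:R + c) * alt_wsum b c w n.+1
  = \sum_(0 <= k < n.+2) ('C(n.+1, k)%:R * (-1) ^+ k * w k)
    + b * (n.+1)%:R * alt_wsum b c w n.
Proof.
move=> hbc; rewrite /alt_wsum.
have -> : \sum_(0 <= k < n.+1) ('C(n, k)%:R * (-1) ^+ k * w k / (b * k%:R + c))
  = \sum_(0 <= k < n.+2) ('C(n, k)%:R * (-1) ^+ k * w k / (b * k%:R + c)).
  by rewrite [in RHS]big_nat_recr //= (bin_small (ltnSn n)) !mul0r addr0.
rewrite !mulr_sumr -big_split /=.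
apply: eq_big_nat => k /andP[_ hk].
have hn : (n.+1)%:R != 0 :> R by rewrite pnatr_eq0.
have absorb : ('C(n, k)%:R : R) = ((n.+1)%:R - k%:R) * 'C(n.+1, k)%:R / (n.+1)%:R.
  rewrite -natrB; last by rewrite -ltnS.
  rewrite -natrM -(mul_bin_down n.+1 k) natrM /=; field.
  by rewrite addrC natr1.
by rewrite absorb; field; rewrite ?hbc ?(addrC 1) ?natr1.
Qed.

Lemma gbinom0 a : gbinom a 0 = 1.
Proof. by rewrite /gbinom big_ord0 fact0 divr1. Qed.

Lemma gbinomS a n : gbinom a n.+1 = gbinom a n * (a - n%:R) / (n.+1)%:R.
Proof.
rewrite /gbinom big_ord_recr factS natrM invfM /=.
set P := \prod_(i < n) _; set F := (n`!)%:R; set N := (n.+1)%:R.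
ring.
Qed.

Section PositiveDenominators.

Variables b c : rat.
Hypotheses (hb : 0 < b) (hc : 0 < c).

Lemma denom_neq0 k : b * k%:R + c != 0.
Proof. by apply: lt0r_neq0; rewrite ltr_wpDl ?mulr_ge0 ?ler0n ?ltW. Qed.

(* binom(-c/b, n) never vanishes since every factor -c/b - i is negative. *)
Lemma gbinom_neg_neq0 n : gbinom (- (c / b)) n != 0.
Proof.
elim: n => [|n IH]; first by rewrite gbinom0 oner_neq0.
rewrite gbinomS; apply: mulf_neq0; last by rewrite invr_neq0 // pnatr_eq0.
apply: mulf_neq0 => //; apply: ltr0_neq0.
by rewrite -opprD oppr_lt0 ltr_wpDr ?ler0n ?divr_gt0.
Qed.

Lemma alt_wsum1S n :
  (b * (n.+1)%:R + c) * alt_wsum b c (fun _ => 1) n.+1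
  = b * (n.+1)%:R * alt_wsum b c (fun _ => 1) n.
Proof.
rewrite alt_wsumS; last exact: denom_neq0.
under eq_bigr do rewrite mulr1.
by rewrite alt_binom_sum0 add0r.
Qed.

Lemma alt_wsum1 n :
  alt_wsum b c (fun _ => 1) n
  = (-1) ^+ n / ((b * n%:R + c) * gbinom (- (c / b)) n).
Proof.
elim: n => [|n IH].
  by rewrite /alt_wsum big_nat1 gbinom0 bin0 expr0 mulr0 add0r !mul1r mulr1.
apply: (mulfI (denom_neq0 n.+1)); rewrite alt_wsum1S IH gbinomS exprS.
have := gbinom_neg_neq0 n; have := denom_neq0 n; have := denom_neq0 n.+1.
move=> h1 h2 h3; field.
have hbn := mulr_ge0 (ltW hb) (ler0n rat n).
rewrite [1 + _]addrC natr1 h1 h2 h3 pnatr_eq0 (gt_eqF hb) /= andbT.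
apply: ltr0_neq0; rewrite -[1 *- n]/(- n%:R) mulNr mulrC -opprD oppr_lt0.
by rewrite ltr_wpDr.
Qed.

End PositiveDenominators.

Lemma gbinom_neg1 n : gbinom (-1) n = (-1) ^+ n.
Proof.
elim: n => [|n IH]; first exact: gbinom0.
rewrite gbinomS IH exprS; field.
by rewrite addrC natr1 pnatr_eq0.
Qed.

Lemma alt_binom_sum_inv_succ n :
  \sum_(0 <= k < n.+1) ('C(n, k)%:R * (-1) ^+ k / (k.+1)%:R) = 1 / (n.+1)%:R :> rat.
Proof.
have -> : 1 / (n.+1)%:R = alt_wsum 1 1 (fun _ => 1) n :> rat.
  rewrite (@alt_wsum1 1 1) ?ltr01 // divr1 gbinom_neg1 !mul1r natr1.
  by rewrite invfM mulrCA divff ?signr_eq0 // mulr1.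
by apply: eq_bigr => k _; rewrite mulr1 mul1r natr1.
Qed.

Lemma harmonicS k : harmonic k.+1 = harmonic k + ((k.+1)%:R)^-1.
Proof. by rewrite /harmonic big_nat_recr. Qed.

(* \sum_k C(n+1,k) (-1)^k H_k = -1/(n+1): the forward differences of H are
   -1/(k+1), so this is the previous identity. *)
Lemma alt_binom_sum_harmonic n :
  \sum_(0 <= k < n.+2) ('C(n.+1, k)%:R * (-1) ^+ k * harmonic k)
  = - (1 / (n.+1)%:R).
Proof.
rewrite alt_binom_sum_diff -alt_binom_sum_inv_succ -sumrN.
by apply: eq_bigr => k _; rewrite harmonicS opprD addrA subrr add0r mulrN.
Qed.

Definition gbinom_alt_sum (a : rat) n : rat :=
  \sum_(1 <= k < n.+1) (gbinom a k * (-1) ^+ k / k%:R).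

Lemma gbinom_alt_sumS a n :
  gbinom_alt_sum a n.+1 = gbinom_alt_sum a n + gbinom a n.+1 * (-1) ^+ n.+1 / (n.+1)%:R.
Proof. by rewrite /gbinom_alt_sum big_nat_recr. Qed.

Section HarmonicTransform.

Variables b c : rat.
Hypotheses (hb : 0 < b) (hc : 0 < c).

(* b (n+1) S_n(1) times the (n+1)-st term of Q(-c/b) equals 1/(n+1); this
   matches the inhomogeneous term of the recurrence for S(H). *)
Lemma alt_wsum1_gbinom_term n :
  b * (n.+1)%:R * alt_wsum b c (fun _ => 1) n
    * (gbinom (- (c / b)) n.+1 * (-1) ^+ n.+1 / (n.+1)%:R)
  = 1 / (n.+1)%:R.
Proof.
have h1 := gbinom_neg_neq0 hb hc n; have h2 := denom_neq0 hb hc n.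
rewrite alt_wsum1 // gbinomS !exprS -{2}[(-1) ^+ n]invr_sign; field.
by rewrite addrC natr1 h1 h2 (gt_eqF hb) pnatr_eq0 signr_eq0.
Qed.

Lemma alt_wsum_harmonic n :
  alt_wsum b c harmonic n
  = - alt_wsum b c (fun _ => 1) n * gbinom_alt_sum (- (c / b)) n.
Proof.
elim: n => [|n IH].
  by rewrite /gbinom_alt_sum big_geq // mulr0 /alt_wsum big_nat1 /harmonic big_geq // mulr0 mul0r.
apply: (mulfI (denom_neq0 hb hc n.+1)).
rewrite alt_wsumS; last exact: denom_neq0.
rewrite alt_binom_sum_harmonic IH gbinom_alt_sumS -(alt_wsum1_gbinom_term n).
set S1 := alt_wsum b c _ n.+1; set t := _ / (n.+1)%:R.
have -> : (b * (n.+1)%:R + c) * (- S1 * (gbinom_alt_sum (- (c / b)) n + t))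
   = - ((b * (n.+1)%:R + c) * S1) * (gbinom_alt_sum (- (c / b)) n + t) by ring.
rewrite alt_wsum1S //; ring.
Qed.

End HarmonicTransform.

Theorem mainTheorem8 (n : nat) :
  [/\ \sum_(0 <= k < n.+1) ('C(n, k)%:R * (-1) ^+ k / (4 * k%:R + 1) : rat)
        = 1 / (4 * n%:R + 1) * ((-1) ^+ n / gbinom (- (1/4)) n),
      \sum_(0 <= k < n.+1) ('C(n, k)%:R * (-1) ^+ k / (4 * k%:R + 1) * harmonic k : rat)
        = - (1 / (4 * n%:R + 1) * ((-1) ^+ n / gbinom (- (1/4)) n))
          * \sum_(1 <= k < n.+1) (gbinom (- (1/4)) k * (-1) ^+ k / k%:R),
      \sum_(0 <= k < n.+1) ('C(n, k)%:R * (-1) ^+ k / (4 * k%:R + 3) : rat)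
        = (-1) ^+ n / ((4 * n%:R + 3) * gbinom (- (3/4)) n)
    & \sum_(0 <= k < n.+1) ('C(n, k)%:R * (-1) ^+ k * harmonic k / (4 * k%:R + 3) : rat)
        = - ((-1) ^+ n / ((4 * n%:R + 3) * gbinom (- (3/4)) n))
          * \sum_(1 <= k < n.+1) (gbinom (- (3/4)) k * (-1) ^+ k / k%:R)].
Proof.
have h4 : (0 : rat) < 4 by [].
have S1 (c : rat) : 0 < c -> \sum_(0 <= k < n.+1) ('C(n, k)%:R * (-1) ^+ k / (4 * k%:R + c))
    = (-1) ^+ n / ((4 * n%:R + c) * gbinom (- (c / 4)) n).
  move=> hc; rewrite -(alt_wsum1 h4 hc) /alt_wsum.
  by apply: eq_bigr => k _; rewrite mulr1.
have SH (c : rat) : 0 < c -> alt_wsum 4 c harmonic n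
    = - ((-1) ^+ n / ((4 * n%:R + c) * gbinom (- (c / 4)) n)) * gbinom_alt_sum (- (c / 4)) n.
  by move=> hc; rewrite alt_wsum_harmonic // alt_wsum1.
split.
- by rewrite S1 // invfM mul1r mulrCA.
- rewrite (_ : \sum_(0 <= k < n.+1) _ = alt_wsum 4 1 harmonic n); last first.
    by apply: eq_bigr => k _; rewrite mulrAC.
  by rewrite SH // invfM mul1r mulrCA.
- exact: S1.
- exact: SH.
Qed.
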